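(* Fix an even integer $k\ge2$ and variables $X_{i,j}$ for $i\in\{1,\ldots,k\}$, $j\in\{1,\ldots,k/2\}$. Let $$Q = R(X_{1,1},\ldots,X_{k,k/2}) \leftarrow \bigwedge_{j=1}^{k/2} R_j(X_{1,j},\ldots,X_{k,j}) \wedge \bigwedge_{i=1}^{k} T_i(X_{i,1},\ldots,X_{i,k/2}),$$ where the head contains all $k^2/2$ variables, with the functional dependencies: for each $j\in\{1,\ldots,k/2\}$, each subset $S\subseteq\{X_{1,j},\ldots,X_{k,j}\}$ with $|S|\ge k/2$, and each $i\in\{1,\ldots,k\}$, the dependency $S\to X_{i,j}$ (holding on relation $R_j$). Then $C(Q)\le 2$.
   Context: Valid coloring: a map $\mathcal{L}$ assigning to each query variable $X$ a finite set $\mathcal{L}(X)$ of colors such that for every functional dependency $Y_1,\ldots,Y_j\to Y$ among query variables, $\mathcal{L}(Y)\subseteq\bigcup_i\mathcal{L}(Y_i)$. Color number of a query with head list $u_0$ and body atoms with variable lists $u_1,\ldots,u_m$: $C(Q)=\max_{\mathcal{L}} \frac{|\bigcup_{X\in u_0}\mathcal{L}(X)|}{\max_{i\ge1}|\bigcup_{X\in u_i}\mathcal{L}(X)|}$, the maximum over valid colorings with positive denominator. *)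

From HB Require Import structures.
From mathcomp Require Import all_boot all_order all_algebra.
Set Implicit Arguments. Unset Strict Implicit. Unset Printing Implicit Defensive.
Import Order.TTheory GRing.Theory Num.Theory.

Definition coloring (V C : finType) := V -> {set C}.

Definition colors_of (V C : finType) (L : coloring V C) (U : {set V}) : {set C} :=
  \bigcup_(x in U) L x.

(* A functional dependency Y_1..Y_j -> Y is given as a pair (lhs set, rhs variable);
   a set of FDs is a predicate on such pairs. *)
Definition fd_set (V : finType) := {set V} -> V -> bool.

Definition valid_coloring (V C : finType) (fds : fd_set V) (L : coloring V C) : Prop :=
  forall (S : {set V}) (y : V), fds S y -> L y \subset colors_of L S.

Definition body_colors (V C : finType) (body : seq {set V}) (L : coloring V C) : nat :=
  \max_(a <- body) #|colors_of L a|.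

(* The ratio whose maximum over valid colorings is the color number C(Q). *)
Definition color_ratio (V C : finType) (head : {set V}) (body : seq {set V})
  (L : coloring V C) : rat :=
  (#|colors_of L head|%:R / (body_colors body L)%:R)%R.

(* Variables X_{i,j}, i < k, j < k/2 (0-indexed). *)
Definition qvar (k : nat) : finType := ('I_k * 'I_(k./2))%type.

Definition Q_head (k : nat) : {set qvar k} := [set: qvar k].

(* Column j: the variables of atom R_j. *)
Definition Q_col (k : nat) (j : 'I_(k./2)) : {set qvar k} := [set x | x.2 == j].
(* Row i: the variables of atom T_i. *)
Definition Q_row (k : nat) (i : 'I_k) : {set qvar k} := [set x | x.1 == i].

Definition Q_body (k : nat) : seq {set qvar k} :=
  [seq Q_col j | j <- enum 'I_(k./2)] ++ [seq Q_row i | i <- enum 'I_k].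

Definition Q_fds (k : nat) : fd_set (qvar k) :=
  fun S y => (S \subset Q_col y.2) && (k./2 <= #|S|).

Arguments Q_head k : clear implicits.
Arguments Q_body k : clear implicits.
Arguments Q_fds k : clear implicits.

From HB Require Import structures.
From mathcomp Require Import all_boot all_order all_algebra zify.
Import Order.TTheory GRing.Theory Num.Theory.
Set Implicit Arguments. Unset Strict Implicit. Unset Printing Implicit Defensive.

(* Fix a valid coloring L and let D be the largest number of colors of a body
   atom.  Take a color c of the head, carried by some variable X_{i,j}.  In
   column j the variables that do NOT carry c form a set of size < k/2: a set
   of size >= k/2 inside column j functionally determines X_{i,j}, so one of
   its members would carry c.  Hence at least k - k/2 = k/2 variables of
   column j carry c; they lie in distinct rows, so c occurs in at least k/2
   row atoms T_i.  Double counting the pairs (c, i) with c a color of T_i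
   gives  |colors(head)| * k/2 <= sum_i |colors(T_i)| <= k * D = 2 * (k/2) * D,
   i.e. |colors(head)| <= 2 D. *)

Lemma colors_ofP (V C : finType) (L : coloring V C) (U : {set V}) (c : C) :
  reflect (exists2 x, x \in U & c \in L x) (c \in colors_of L U).
Proof. exact: bigcupP. Qed.

Lemma valid_coloring_witness (V C : finType) (fds : fd_set V) (L : coloring V C)
    (S : {set V}) (y : V) (c : C) :
  valid_coloring fds L -> fds S y -> c \in L y ->
  exists2 x, x \in S & c \in L x.
Proof. by move=> hv /hv /subsetP hsub /hsub /colors_ofP. Qed.

Lemma double_counting (I C : finType) (F : I -> {set C}) (T : {set C}) (m : nat) :
  (forall c, c \in T -> m <= #|[set i | c \in F i]|) ->
  #|T| * m <= \sum_i #|F i|.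
Proof.
move=> hT.
have -> : \sum_i #|F i| = \sum_c #|[set i | c \in F i]|.
  transitivity (\sum_i \sum_c ((c \in F i) : nat)).
    by apply: eq_bigr => i _; rewrite -sum1_card big_mkcond.
  rewrite exchange_big; apply: eq_bigr => c _.
  rewrite -sum1_card [RHS]big_mkcond; apply: eq_bigr => i _.
  by rewrite inE.
rewrite -sum1_card big_distrl /= [X in _ <= X](bigID (mem T)) /=.
by apply: leq_trans (leq_addr _ _); apply: leq_sum => c cT; rewrite mul1n hT.
Qed.

Section QueryQ.

Variables (k : nat) (C : finType) (L : coloring (qvar k) C).
Hypothesis hv : valid_coloring (Q_fds k) L.

Lemma column_missing_small (x : qvar k) (c : C) :
  c \in L x -> #|[set i : 'I_k | c \notin L (i, x.2)]| < k./2.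
Proof.
move=> cx; rewrite ltnNge; apply/negP => big.
pose S := (fun i => (i, x.2)) @: [set i : 'I_k | c \notin L (i, x.2)].
have cardS : #|S| = #|[set i : 'I_k | c \notin L (i, x.2)]|.
  by rewrite card_imset // => i i' [].
have fdS : Q_fds k S x.
  rewrite /Q_fds cardS big andbT; apply/subsetP => _ /imsetP[i _ ->].
  by rewrite inE.
have [_ /imsetP[i + ->]] := valid_coloring_witness hv fdS cx.
by rewrite inE => /negPf ->.
Qed.

Lemma head_color_rows (c : C) :
  ~~ odd k -> c \in colors_of L (Q_head k) ->
  k./2 <= #|[set i : 'I_k | c \in colors_of L (Q_row i)]|.
Proof.
move=> keven /colors_ofP[x _ cx].
set A := [set i : 'I_k | c \in L (i, x.2)].
have missA : #|~: A| < k./2.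
  have -> : ~: A = [set i : 'I_k | c \notin L (i, x.2)] by apply/setP => i; rewrite !inE.
  exact: column_missing_small.
have bigA : k./2 <= #|A|.
  have splitk : #|A| + #|~: A| = k./2 + k./2 by rewrite cardsC card_ord addnn even_halfK.
  lia.
apply: (leq_trans bigA); apply: subset_leq_card; apply/subsetP => i.
by rewrite !inE => ci; apply/colors_ofP; exists (i, x.2); rewrite ?inE.
Qed.

Lemma row_colors_le_body (i : 'I_k) :
  #|colors_of L (Q_row i)| <= body_colors (Q_body k) L.
Proof.
apply: (@leq_bigmax_seq _ _ _ (fun a => #|colors_of L a|)) => //.
by rewrite mem_cat; apply/orP; right; apply: map_f; rewrite mem_enum.
Qed.

End QueryQ.

Theorem mainTheorem5 (k : nat) (hk2 : 2 <= k) (hkeven : ~~ odd k)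
  (C : finType) (L : coloring (qvar k) C) :
  valid_coloring (Q_fds k) L ->
  0 < body_colors (Q_body k) L ->
  (color_ratio (Q_head k) (Q_body k) L <= 2%:R)%R.
Proof.
move=> hv hD.
set D := body_colors (Q_body k) L in hD *.
set T := colors_of L (Q_head k).
have half_pos : 0 < k./2 by rewrite -double_gt0 even_halfK // (leq_trans _ hk2).
have count_rows : #|T| * k./2 <= \sum_(i < k) #|colors_of L (Q_row i)|.
  by apply: double_counting => c; apply: head_color_rows.
have sum_rows : \sum_(i < k) #|colors_of L (Q_row i)| <= 2 * D * k./2.
  rewrite mulnAC mul2n even_halfK // -[k in k * D]card_ord.
  by rewrite -sum_nat_const; apply: leq_sum => i _; apply: row_colors_le_body.
have boundT : #|T| <= 2 * D by rewrite -(leq_pmul2r half_pos) (leq_trans count_rows).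
by rewrite /color_ratio -/D -/T ler_pdivrMr ?ltr0n // -natrM ler_nat.
Qed.
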